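(* Let $m,n,r,d$ be integers with $m,n\ge2$, $d\ge1$, $0<r<\min\{m,n\}$, let $0\le a\le rd$, and for every list of integers $(\rho_1,\dots,\rho_r)$ with $0\le\rho_i\le d$ and $\sum_i\rho_i=a$ let $$\mathcal{A}(\rho_1,\dots,\rho_r)=\Big\{L(\lambda)R(\lambda): L\in\mathbb{C}[\lambda]^{m\times r},\ R\in\mathbb{C}[\lambda]^{r\times n},\ \deg(R_{i*})=\rho_i,\ \deg(L_{*i})=d-\rho_i\ (i=1,\dots,r)\Big\}.$$ Then, for any such list $(\rho_1,\dots,\rho_r)$: (i) if $(\sigma_1,\dots,\sigma_r)$ is any permutation of $(1,\dots,r)$, then $\mathcal{A}(\rho_1,\dots,\rho_r)=\mathcal{A}(\rho_{\sigma_1},\dots,\rho_{\sigma_r})$; (ii) if $\rho_j-\rho_k\ge2$ for some indices $j\ne k$, then $\mathcal{A}(\rho_1,\dots,\rho_r)\subseteq\overline{\mathcal{A}(\rho'_1,\dots,\rho'_r)}$, where $\rho'_j=\rho_j-1$, $\rho'_k=\rho_k+1$ and $\rho'_i=\rho_i$ for $i\ne j,k$; (iii) if $d_R=\lfloor a/r\rfloor$ and $t_R=a\bmod r$, then $\mathcal{A}(\rho_1,\dots,\rho_r)\subseteq\overline{\mathcal{A}(d_R+1,\dots,d_R+1,d_R,\dots,d_R)}$, where $d_R+1$ appears $t_R$ times and $d_R$ appears $r-t_R$ times.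
   Context: Degree of a polynomial vector: maximum degree of entries, $\deg0=-\infty$. $L_{*i}$: $i$th column; $R_{i*}$: $i$th row. Closures are taken in the space $\mathbb{C}[\lambda]^{m\times n}_d$ of complex $m\times n$ polynomial matrices of degree at most $d$, with metric $\mathrm{dist}(P,Q)=(\sum_{i=0}^d\|P_i-Q_i\|_F^2)^{1/2}$, $P_i,Q_i$ the coefficients of $\lambda^i$. *)

(* complex numbers C := R[i] over an arbitrary realType R
   (every realType is a complete archimedean ordered field, i.e. the reals). *)
From HB Require Import structures.
From mathcomp Require Import all_boot all_order all_algebra all_fingroup.
From mathcomp Require Import complex.
From mathcomp Require Import reals.
Set Implicit Arguments. Unset Strict Implicit. Unset Printing Implicit Defensive.
Import Order.TTheory GRing.Theory Num.Theory.
Local Open Scope ring_scope.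
Local Open Scope complex_scope.

Section PolyMx.
Variable R : realType.
Local Notation C := (R[i]).

(* deg of a polynomial vector (max of entry degrees, deg 0 = -oo) equals k,
   for k a natural number: the max of entry sizes (size = deg + 1) is k+1. *)
Definition row_deg_is p q (M : 'M[{poly C}]_(p, q)) (i : 'I_p) (k : nat) : Prop :=
  (\max_(j < q) size (M i j))%N = k.+1.
Definition col_deg_is p q (M : 'M[{poly C}]_(p, q)) (j : 'I_q) (k : nat) : Prop :=
  (\max_(i < p) size (M i j))%N = k.+1.

Definition calA (m n r d : nat) (rho : 'I_r -> nat) : 'M[{poly C}]_(m, n) -> Prop :=
  fun P => exists (L : 'M[{poly C}]_(m, r)) (Rm : 'M[{poly C}]_(r, n)),
    P = L *m Rm /\
    forall i : 'I_r, row_deg_is Rm i (rho i) /\ col_deg_is L i (d - rho i).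

Definition deg_le_mx (m n d : nat) (P : 'M[{poly C}]_(m, n)) : Prop :=
  forall i j, (size (P i j) <= d.+1)%N.

Definition normsqC (z : C) : R := (@complex.Re R z) ^+ 2 + (@complex.Im R z) ^+ 2.

Definition pdist (m n d : nat) (P Q : 'M[{poly C}]_(m, n)) : R :=
  Num.sqrt (\sum_(l < d.+1) \sum_(i < m) \sum_(j < n)
              normsqC ((P i j)`_l - (Q i j)`_l)).

Definition closure_d (m n d : nat) (S : 'M[{poly C}]_(m, n) -> Prop)
    (P : 'M[{poly C}]_(m, n)) : Prop :=
  deg_le_mx d P /\
  forall e : R, 0 < e -> exists Q, S Q /\ deg_le_mx d Q /\ pdist d P Q < e.

End PolyMx.
Arguments calA {R} m n r d rho _.
Arguments closure_d {R} m n d S P.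
Arguments deg_le_mx {R} m n d P.
Arguments pdist {R} m n d P Q.

From HB Require Import structures.
From mathcomp Require Import all_boot all_order all_algebra all_fingroup.
From mathcomp Require Import complex reals ring lra zify.
Import Order.TTheory GRing.Theory Num.Theory.
Set Implicit Arguments. Unset Strict Implicit. Unset Printing Implicit Defensive.
Local Open Scope ring_scope.
Local Open Scope complex_scope.

(* (i) Permuting the columns of L and the rows of R by the same permutation leaves LR unchanged.
   (ii) Write R_j = c + lambda q and L_k = e + lambda p with c, e constant.  For eps <> 0, the
   columns lambda L_j + eps e and p - L_j / eps of a new left factor, together with the rows
   q + R_k / eps and lambda R_k - eps c of a new right factor, have degrees d - rho_j + 1,
   d - rho_k - 1, rho_j - 1 and rho_k + 1 (the gap rho_j - rho_k >= 2 keeps the 1/eps terms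
   from raising the degree), and the product differs from LR only by eps (e q - p c), which
   tends to 0 with eps.
   (iii) A step of (ii) keeps sum rho_i and strictly decreases sum rho_i^2, so iterating it
   (the closure is transitive) reaches a profile whose entries pairwise differ by at most one.
   Such a profile takes the values a/r + 1 and a/r, the first one exactly a mod r times, so it
   is a rearrangement of the target profile and (i) concludes. *)

Section Closure.
Variables (R : realType) (m n d : nat).
Local Notation C := R[i].
Local Notation mx := 'M[{poly C}]_(m, n).

Definition pdist2 (P Q : mx) : R :=
  \sum_(l < d.+1) \sum_(i < m) \sum_(j < n) normsqC ((P i j)`_l - (Q i j)`_l).

Lemma normsqC_ge0 (z : C) : 0 <= normsqC z.
Proof. by rewrite addr_ge0 ?sqr_ge0. Qed.

Lemma normsqCZ (c : R) (z : C) : normsqC (c%:C * z) = c ^+ 2 * normsqC z.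
Proof. by case: z => x y; rewrite /normsqC /=; ring. Qed.

Lemma normsqCN (z : C) : normsqC (- z) = normsqC z.
Proof. by case: z => x y; rewrite /normsqC /= !sqrrN. Qed.

Lemma normsqCD_le (z w : C) : normsqC (z + w) <= 2 * normsqC z + 2 * normsqC w.
Proof.
case: z w => [x y] [x' y']; rewrite /normsqC /=.
have := sqr_ge0 (x - x'); have := sqr_ge0 (y - y'); nra.
Qed.

Lemma pdist2_ge0 (P Q : mx) : 0 <= pdist2 P Q.
Proof. by do 3!apply: sumr_ge0 => ? _; exact: normsqC_ge0. Qed.

(* This weak triangle inequality is all the transitivity of the closure needs. *)
Lemma pdist2_triangle (P Q S : mx) :
  pdist2 P S <= 2 * pdist2 P Q + 2 * pdist2 Q S.
Proof.
rewrite /pdist2 !mulr_sumr -big_split; apply: ler_sum => l _.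
rewrite !mulr_sumr -big_split; apply: ler_sum => i _.
rewrite !mulr_sumr -big_split; apply: ler_sum => j _.
by have := normsqCD_le ((P i j)`_l - (Q i j)`_l) ((Q i j)`_l - (S i j)`_l); rewrite addrA subrK.
Qed.

Lemma pdist_lt (P Q : mx) (e : R) : 0 < e -> (pdist m n d P Q < e) = (pdist2 P Q < e ^+ 2).
Proof. by move=> e_gt0; rewrite -{1}(gtr0_norm e_gt0) -sqrtr_sqr ltr_sqrt ?exprn_gt0. Qed.

Lemma pdist2_segment (P E : mx) (c : R) :
  pdist2 P (P + c%:C%:P *: E) = c ^+ 2 * pdist2 E 0.
Proof.
rewrite /pdist2 !mulr_sumr; apply: eq_bigr => l _.
rewrite !mulr_sumr; apply: eq_bigr => i _.
rewrite !mulr_sumr; apply: eq_bigr => j _.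
by rewrite !mxE coefD coefCM opprD addNKr normsqCN normsqCZ coef0 subr0.
Qed.

Lemma closure_d_refl (S : mx -> Prop) P : deg_le_mx m n d P -> S P -> closure_d m n d S P.
Proof.
move=> dP SP; split=> // e e_gt0; exists P; split=> //; split=> //.
rewrite pdist_lt // /pdist2 big1 ?exprn_gt0 // => l _.
by do 2!rewrite big1 // => ? _; rewrite subrr /normsqC /= expr0n addr0.
Qed.

Lemma closure_d_trans (S T : mx -> Prop) P :
  (forall Q, S Q -> closure_d m n d T Q) -> closure_d m n d S P -> closure_d m n d T P.
Proof.
move=> ST [dP clP]; split=> // e e_gt0.
have e2_gt0 : 0 < e / 2 by rewrite divr_gt0.
have [Q [SQ [_ PQ]]] := clP _ e2_gt0.
have [_ /(_ _ e2_gt0) [U [TU [dU QU]]]] := ST Q SQ.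
exists U; split=> //; split=> //.
move: PQ QU; rewrite !pdist_lt // => PQ QU.
apply: le_lt_trans (pdist2_triangle P Q U) _.
have -> : e ^+ 2 = 2 * (e / 2) ^+ 2 + 2 * (e / 2) ^+ 2 by field.
by rewrite ltrD // ltr_pM2l.
Qed.

Lemma closure_d_segment (S : mx -> Prop) P E :
  (forall Q, S Q -> deg_le_mx m n d Q) -> deg_le_mx m n d P ->
  (forall c : R, 0 < c -> S (P + c%:C%:P *: E)) -> closure_d m n d S P.
Proof.
move=> Sdeg dP SPE; split=> // e e_gt0.
pose c := e / (pdist2 E 0 + 1).
have K_ge0 := pdist2_ge0 E 0.
have c_gt0 : 0 < c by rewrite divr_gt0 // ltr_wpDl.
have cK : c * (pdist2 E 0 + 1) = e by rewrite /c mulfVK // gt_eqF // ltr_wpDl.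
exists (P + c%:C%:P *: E); split; first exact: SPE.
split; first exact/Sdeg/SPE.
by rewrite pdist_lt // pdist2_segment -cK; nra.
Qed.

End Closure.

Lemma bigmax_eqSP q (h : 'I_q -> nat) s :
  (\max_(y < q) h y)%N = s.+1 <-> (exists y, h y = s.+1) /\ (forall y, h y <= s.+1)%N.
Proof.
split=> [hmax | [[y <-] h_le]].
  split=> [|y]; last by rewrite -hmax leq_bigmax.
  case: q h hmax => [|q] h; first by rewrite big_ord0.
  have [y ->] : {y | (\max_i h i)%N = h y} by apply: bigop.eq_bigmax; rewrite card_ord.
  by exists y.
by apply/eqP; rewrite eqn_leq leq_bigmax andbT; apply/bigmax_leqP => z _.
Qed.

Section SizeBigmax.
Variables (K : nzRingType) (q : nat).
Implicit Types (f g : 'I_q -> {poly K}) (s : nat).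

Lemma bigmax_sizeDl f g s :
  (\max_(y < q) size (f y))%N = s.+1 -> (forall y, size (g y) <= s)%N ->
  (\max_(y < q) size (f y + g y)%R)%N = s.+1.
Proof.
move=> /bigmax_eqSP [[y0 f_y0] f_le] g_le; apply/bigmax_eqSP; split.
  by exists y0; rewrite size_polyDl // f_y0 ltnS.
move=> y; apply: leq_trans (size_polyD _ _) _.
by rewrite geq_max f_le (leq_trans (g_le y)).
Qed.

Lemma bigmax_size_mulX f s :
  (\max_(y < q) size (f y))%N = s.+1 -> (\max_(y < q) size ('X * f y)%R)%N = s.+2.
Proof.
move=> /bigmax_eqSP [[y0 f_y0] f_le]; apply/bigmax_eqSP; split.
  by exists y0; rewrite -commr_polyX size_mulX ?f_y0 // -size_poly_eq0 f_y0.
move=> y; have [->|fy_neq0] := eqVneq (f y) 0; first by rewrite mulr0 size_poly0.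
by rewrite -commr_polyX size_mulX // ltnS.
Qed.

Lemma bigmax_size_drop1 f s :
  (\max_(y < q) size (f y))%N = s.+2 ->
  (\max_(y < q) size (drop_poly 1 (f y)))%N = s.+1.
Proof.
move=> /bigmax_eqSP [[y0 f_y0] f_le]; apply/bigmax_eqSP; split.
  by exists y0; rewrite size_drop_poly f_y0 subn1.
by move=> y; rewrite size_drop_poly leq_subLR add1n.
Qed.

End SizeBigmax.

Section Profiles.
Variables (R : realType) (m n r d : nat).
Local Notation C := R[i].

Lemma calA_ext (rho rho' : 'I_r -> nat) (P : 'M[{poly C}]_(m, n)) :
  rho =1 rho' -> calA m n r d rho P -> calA m n r d rho' P.
Proof. by move=> e [L [Rm [-> degs]]]; exists L, Rm; split=> // i; rewrite -e. Qed.

Lemma calA_perm (rho : 'I_r -> nat) (s : 'S_r) (P : 'M[{poly C}]_(m, n)) :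
  calA m n r d rho P -> calA m n r d (rho \o s) P.
Proof.
move=> [L [Rm [-> degs]]].
exists (\matrix_(x, i) L x (s i)), (\matrix_(i, y) Rm (s i) y); split.
  apply/matrixP => x y; rewrite !mxE (reindex_inj (@perm_inj _ s)) /=.
  by apply: eq_bigr => i _; rewrite !mxE.
move=> i; have [row_i col_i] := degs (s i); split.
  by rewrite /row_deg_is -row_i; apply: eq_bigr => y _; rewrite mxE.
by rewrite /col_deg_is -col_i; apply: eq_bigr => x _; rewrite mxE.
Qed.

Lemma calA_permE (rho : 'I_r -> nat) (s : 'S_r) (P : 'M[{poly C}]_(m, n)) :
  calA m n r d rho P <-> calA m n r d (rho \o s) P.
Proof.
split; first exact: calA_perm.
by move=> /(calA_perm s^-1) /calA_ext; apply=> i /=; rewrite permKV.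
Qed.

Lemma calA_deg_le (rho : 'I_r -> nat) (P : 'M[{poly C}]_(m, n)) :
  (forall i, rho i <= d)%N -> calA m n r d rho P -> deg_le_mx m n d P.
Proof.
move=> rho_le [L [Rm [-> degs]]] x y; rewrite mxE.
apply: (big_ind (fun p : {poly C} => size p <= d.+1)%N); first by rewrite size_poly0.
  by move=> p1 p2 h1 h2; apply: leq_trans (size_polyD _ _) _; rewrite geq_max h1.
move=> i _; have [/bigmax_eqSP [_ row_le] /bigmax_eqSP [_ col_le]] := degs i.
apply: leq_trans (size_polyMleq _ _) _.
by move: (col_le x) (row_le y) (rho_le i) => /=; lia.
Qed.

End Profiles.

Definition move_unit r (rho : 'I_r -> nat) (j k : 'I_r) : 'I_r -> nat :=
  fun i => if i == j then (rho j - 1)%N else if i == k then (rho k + 1)%N else rho i.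

Section MoveUnit.
Variables (r : nat) (rho : 'I_r -> nat) (j k : 'I_r).
Hypothesis neq_jk : j != k.

Lemma move_unit_le d : (rho k < rho j)%N -> (forall i, rho i <= d)%N ->
  forall i, (move_unit rho j k i <= d)%N.
Proof.
move=> lt_kj rho_le i; rewrite /move_unit.
case: eqP => _; first by rewrite leq_subLR (leq_trans (rho_le j)) ?leq_addl.
by case: eqP => [_|_ //]; rewrite addn1 (leq_trans lt_kj).
Qed.

Lemma sum_move_unit (F : nat -> nat) :
  (\sum_i F (move_unit rho j k i) + (F (rho j) + F (rho k)) =
   \sum_i F (rho i) + (F (rho j - 1) + F (rho k + 1)))%N.
Proof.
have neq_kj : k != j by rewrite eq_sym.
rewrite (bigD1 j) // (bigD1 k) //= [in RHS](bigD1 j) // [in RHS](bigD1 k) //=.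
rewrite /move_unit eqxx (negbTE neq_kj) eqxx.
under eq_bigr => i /andP [nij nik] do rewrite (negbTE nij) (negbTE nik).
lia.
Qed.

End MoveUnit.

Lemma transfer_pair_id (T : comRingType) (x a b c c' e e' s u eps : T) : eps * u = 1 ->
  (x * a + eps * e) * (c' + u * b) + ((e' - u * a) * (x * b - eps * c) + s)
  = a * (c + c' * x) + ((e + e' * x) * b + s) + eps * (e * c' - e' * c).
Proof.
(* The two sides differ by (eps u - 1) (e b + a c). *)
move=> eps_u; rewrite -[RHS]addr0 -(mul0r (e * b + a * c)) -(subrr 1) -{1}eps_u.
ring.
Qed.

Section UnitTransfer.
Variables (R : realType) (m n r d : nat) (rho : 'I_r -> nat) (j k : 'I_r).
Local Notation C := R[i].
Variables (L : 'M[{poly C}]_(m, r)) (Rm : 'M[{poly C}]_(r, n)).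
Hypotheses (neq_jk : j != k) (gap_jk : (rho k + 2 <= rho j)%N) (rhoj_le : (rho j <= d)%N).
Hypothesis degs : forall i, row_deg_is Rm i (rho i) /\ col_deg_is L i (d - rho i).

Definition transferL (eps : C) : 'M[{poly C}]_(m, r) := \matrix_(x, i)
  if i == j then 'X * L x j + eps *: take_poly 1 (L x k)
  else if i == k then drop_poly 1 (L x k) - eps^-1 *: L x j
  else L x i.

Definition transferR (eps : C) : 'M[{poly C}]_(r, n) := \matrix_(i, y)
  if i == j then drop_poly 1 (Rm j y) + eps^-1 *: Rm k y
  else if i == k then 'X * Rm k y - eps *: take_poly 1 (Rm j y)
  else Rm i y.

Definition transfer_err : 'M[{poly C}]_(m, n) := \matrix_(x, y)
  (take_poly 1 (L x k) * drop_poly 1 (Rm j y) - drop_poly 1 (L x k) * take_poly 1 (Rm j y)).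

Let neq_kj : (k == j) = false. Proof. by rewrite eq_sym (negbTE neq_jk). Qed.

Lemma mulmx_transfer eps : eps != 0 ->
  transferL eps *m transferR eps = L *m Rm + eps%:P *: transfer_err.
Proof.
move=> eps_neq0; apply/matrixP => x y; rewrite !mxE.
rewrite (bigD1 j) // (bigD1 k) 1?eq_sym //= [in RHS](bigD1 j) // [in RHS](bigD1 k) 1?eq_sym //=.
rewrite !mxE eqxx neq_kj eqxx.
under eq_bigr => i /andP [nij nik] do rewrite !mxE (negbTE nij) (negbTE nik).
set err := take_poly 1 (L x k) * drop_poly 1 (Rm j y) - _.
rewrite -!mul_polyC -[Rm j y in RHS](poly_take_drop 1) -[L x k in RHS](poly_take_drop 1) expr1.
by apply: transfer_pair_id; rewrite -polyCM mulfV.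
Qed.

Let size_Rm i y : (size (Rm i y) <= (rho i).+1)%N.
Proof. by have [/bigmax_eqSP [_ ->] _] := degs i. Qed.

Let size_L x i : (size (L x i) <= (d - rho i).+1)%N.
Proof. by have [_ /bigmax_eqSP [_ ->]] := degs i. Qed.

Let size_scale_take (a : C) p : (size (a *: take_poly 1 p) <= 1)%N.
Proof. exact: leq_trans (size_scale_leq _ _) (size_take_poly _ _). Qed.

Lemma row_deg_transferR_j eps : row_deg_is (transferR eps) j (rho j - 1).
Proof.
rewrite /row_deg_is; under eq_bigr => y _ do rewrite mxE eqxx.
have [s rhoj] : exists s, rho j = s.+1 by exists (rho j - 1)%N; lia.
rewrite rhoj subn1 /=; apply: bigmax_sizeDl.
  by apply: bigmax_size_drop1; rewrite -rhoj; case: (degs j).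
by move=> y; apply: leq_trans (size_scale_leq _ _) _; apply: leq_trans (size_Rm k y) _; lia.
Qed.

Lemma col_deg_transferL_j eps : col_deg_is (transferL eps) j (d - (rho j - 1)).
Proof.
rewrite /col_deg_is; under eq_bigr => x _ do rewrite mxE eqxx.
have -> : (d - (rho j - 1)).+1 = (d - rho j).+2 by lia.
apply: bigmax_sizeDl; first by apply: bigmax_size_mulX; case: (degs j).
by move=> x; apply: leq_trans (size_scale_take _ _) _.
Qed.

Lemma row_deg_transferR_k eps : row_deg_is (transferR eps) k (rho k + 1).
Proof.
rewrite /row_deg_is; under eq_bigr => y _ do rewrite mxE neq_kj eqxx.
rewrite addn1; apply: bigmax_sizeDl; first by apply: bigmax_size_mulX; case: (degs k).
by move=> y; rewrite size_polyN; apply: leq_trans (size_scale_take _ _) _.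
Qed.

Lemma col_deg_transferL_k eps : col_deg_is (transferL eps) k (d - (rho k + 1)).
Proof.
rewrite /col_deg_is; under eq_bigr => x _ do rewrite mxE neq_kj eqxx.
have [s dk] : exists s, (d - rho k = s.+1)%N by exists (d - rho k - 1)%N; lia.
have -> : ((d - (rho k + 1)).+1 = s.+1)%N by lia.
apply: bigmax_sizeDl; first by apply: bigmax_size_drop1; rewrite -dk; case: (degs k).
move=> x; rewrite size_polyN; apply: leq_trans (size_scale_leq _ _) _.
by apply: leq_trans (size_L x j) _; lia.
Qed.

Lemma transfer_degs eps (i : 'I_r) :
  row_deg_is (transferR eps) i (move_unit rho j k i) /\
  col_deg_is (transferL eps) i (d - move_unit rho j k i)%N.
Proof.
rewrite /move_unit; have [->|nij] := eqVneq i j.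
  by split; [exact: row_deg_transferR_j | exact: col_deg_transferL_j].
have [->|nik] := eqVneq i k.
  by split; [exact: row_deg_transferR_k | exact: col_deg_transferL_k].
have [row_i col_i] := degs i; split.
  by rewrite /row_deg_is -row_i; apply: eq_bigr => y _; rewrite mxE (negbTE nij) (negbTE nik).
by rewrite /col_deg_is -col_i; apply: eq_bigr => x _; rewrite mxE (negbTE nij) (negbTE nik).
Qed.

Lemma calA_transfer eps : eps != 0 ->
  calA m n r d (move_unit rho j k) (L *m Rm + eps%:P *: transfer_err).
Proof.
move=> eps_neq0; exists (transferL eps), (transferR eps).
by rewrite mulmx_transfer //; split=> // i; exact: transfer_degs.
Qed.

End UnitTransfer.

Lemma calA_move_unit_closure (R : realType) m n r d (rho : 'I_r -> nat) (j k : 'I_r)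
    (P : 'M[{poly R[i]}]_(m, n)) :
  (forall i, rho i <= d)%N -> j != k -> (rho k + 2 <= rho j)%N ->
  calA m n r d rho P -> closure_d m n d (calA m n r d (move_unit rho j k)) P.
Proof.
move=> rho_le neq_jk gap AP; have [L [Rm [P_eq degs]]] := AP.
apply: (closure_d_segment (E := transfer_err j k L Rm)).
- by move=> Q; apply: calA_deg_le; apply: move_unit_le => //; lia.
- exact: calA_deg_le AP.
- move=> c c_gt0; rewrite P_eq; apply: calA_transfer => //.
  by rewrite eq_complex /= eqxx andbT gt_eqF.
Qed.

Definition balanced_profile r a : 'I_r -> nat :=
  fun i => if (i < a %% r)%N then (a %/ r).+1 else (a %/ r)%N.
Arguments balanced_profile : clear implicits.

Lemma perm_eq_bool (s1 s2 : seq bool) :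
  size s1 = size s2 -> count id s1 = count id s2 -> perm_eq s1 s2.
Proof.
move=> size12 count12; have trueE : pred1 true =1 id by case.
have falseE : pred1 false =1 predC id by case.
apply/allP => -[] _ /=; first by rewrite !(eq_count trueE) count12.
rewrite !(eq_count falseE); apply/eqP/(@addnI (count id s1)).
by rewrite count_predC [in RHS]count12 count_predC size12.
Qed.

Lemma count_map_ord r (f : 'I_r -> bool) :
  count id [seq f i | i <- enum 'I_r] = (\sum_(i < r) f i)%N.
Proof. by rewrite count_map -sum1_count big_mkcond big_enum. Qed.

Lemma sum_ord_ltn r t : (\sum_(i < r) (i < t))%N = minn r t.
Proof.
elim: r => [|r IH]; first by rewrite big_ord0 min0n.
by rewrite big_ord_recr /= IH; case: ltnP; lia.
Qed.

Lemma balanced_perm r (rho : 'I_r -> nat) :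
  (forall i i', rho i <= (rho i').+1)%N ->
  exists s : 'S_r, forall i, rho (s i) = balanced_profile r (\sum_i rho i)%N i.
Proof.
case: r rho => [|r] rho balanced; first by exists 1%g; case.
pose i0 := [arg min_(i < ord0) rho i]; pose c := rho i0.
have c_le i : (c <= rho i)%N by rewrite /c /i0; case: arg_minnP => // i1 _; apply.
pose b i := rho i != c.
have rhoE i : rho i = (c + b i)%N.
  by rewrite /b; case: eqP => [->|]; [rewrite addn0 | have := balanced i i0; have := c_le i; lia].
pose t := (\sum_i b i)%N.
have t_lt : (t < r.+1)%N.
  rewrite /t (bigD1 i0) //= /b eqxx add0n ltnS.
  apply: leq_trans (_ : \sum_(i | i != i0) 1 <= r)%N.
    by apply: leq_sum => i _; case: (_ != _).
  by rewrite sum1_card cardC1 card_ord.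
have sumE : (\sum_i rho i = c * r.+1 + t)%N.
  by rewrite (eq_bigr _ (fun i _ => rhoE i)) big_split sum_nat_const card_ord mulnC.
have : perm_eq [seq (i < t)%N | i : 'I_r.+1 <- enum 'I_r.+1] [tuple b i | i < r.+1].
  apply: perm_eq_bool; first by rewrite size_map size_tuple -cardE card_ord.
  by rewrite count_map_ord /= (count_map_ord b) sum_ord_ltn (minn_idPr (ltnW t_lt)).
case/tuple_permP => s s_eq; exists s => i.
have := congr1 (nth false ^~ i) s_eq.
rewrite (nth_map i) ?size_enum_ord // nth_ord_enum -tnth_nth !tnth_mktuple => b_si.
rewrite rhoE -b_si /balanced_profile sumE divnMDl // modnMDl divn_small // modn_small //.
by case: ltnP; rewrite addn0 ?addn1.
Qed.

Lemma calA_closure_balanced (R : realType) m n r d (rho : 'I_r -> nat)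
    (P : 'M[{poly R[i]}]_(m, n)) :
  (forall i, rho i <= d)%N -> calA m n r d rho P ->
  closure_d m n d (calA m n r d (balanced_profile r (\sum_i rho i)%N)) P.
Proof.
have [N] := ubnP (\sum_i rho i ^ 2)%N.
elim: N rho P => // N IH rho P lt_N rho_le AP.
have [/existsP [j /existsP [k /andP [neq_jk gap]]] | no_gap] :=
  boolP [exists j, exists k, (j != k) && (rho k + 2 <= rho j)%N].
  have sum_eq : (\sum_i move_unit rho j k i = \sum_i rho i)%N.
    by have := sum_move_unit rho neq_jk id; lia.
  rewrite -sum_eq; apply: closure_d_trans (calA_move_unit_closure rho_le neq_jk gap AP) => Q.
  apply: IH; last by apply: move_unit_le => //; lia.
  by have := sum_move_unit rho neq_jk (fun x => x ^ 2)%N; nia.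
have balanced i i' : (rho i <= (rho i').+1)%N.
  have [-> //|neq_ii'] := eqVneq i i'.
  by move: no_gap => /existsPn /(_ i) /existsPn /(_ i'); rewrite neq_ii' /=; lia.
have [s rho_s] := balanced_perm balanced.
apply: closure_d_refl; first exact: calA_deg_le AP.
exact: calA_ext (calA_perm s AP).
Qed.

Theorem theorem4p5 (R : realType) (m n r d a : nat)
  (hm : (2 <= m)%N) (hn : (2 <= n)%N) (hd : (1 <= d)%N)
  (hr0 : (0 < r)%N) (hr : (r < minn m n)%N) (ha : (a <= r * d)%N)
  (rho : 'I_r -> nat) (hrho : forall i, (rho i <= d)%N)
  (hsum : (\sum_(i < r) rho i)%N = a) :
  (* (i) *)
  (forall s : 'S_r,
     forall P, calA (R := R) m n r d rho P <-> calA (R := R) m n r d (fun i => rho (s i)) P) /\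
  (* (ii) *)
  (forall j k : 'I_r, j != k -> (rho k + 2 <= rho j)%N ->
     forall P, calA (R := R) m n r d rho P ->
       closure_d m n d (calA (R := R) m n r d
         (fun i => if i == j then (rho j - 1)%N
                   else if i == k then (rho k + 1)%N else rho i)) P) /\
  (* (iii) *)
  (forall P, calA (R := R) m n r d rho P ->
     closure_d m n d (calA (R := R) m n r d
       (fun i : 'I_r => if (i < a %% r)%N then (a %/ r).+1%N else (a %/ r)%N)) P).
Proof.
split; first exact: calA_permE.
split; first by move=> j k neq_jk gap P; exact: calA_move_unit_closure hrho neq_jk gap.
by move=> P; rewrite -hsum; exact: calA_closure_balanced hrho.
Qed.
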